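(* Let $\mathfrak g=\bigoplus_{p\in I}V_p$ and $S=\bigcup_{p\in I}S_p$ be a resonant decomposition (so that $\mathfrak G_R=\bigoplus_p S_p\otimes V_p$ is a resonant subalgebra of $S\otimes\mathfrak g$), and let $|T_{A_1}\cdots T_{A_n}|$ be an invariant tensor for $\mathfrak g$. Denote by $\{T_{a_p}\}$ a basis of $V_p$. (i) For arbitrary constants $\alpha_\gamma$, the components $$|T_{(a_{p_1},\alpha_{p_1})}\cdots T_{(a_{p_n},\alpha_{p_n})}|=\alpha_\gamma K_{\alpha_{p_1}\cdots\alpha_{p_n}}{}^{\gamma}|T_{a_{p_1}}\cdots T_{a_{p_n}}|,\qquad \lambda_{\alpha_{p_k}}\in S_{p_k},$$ form an invariant tensor for $\mathfrak G_R$. (ii) If moreover $S$ has a zero element $\lambda_{N+1}=0_S$ with nonzero elements $\lambda_i$, $i=0,\dots,N$, then for arbitrary constants $\alpha_j$ the components $|T_{(a_{p_1},i_{p_1})}\cdots T_{(a_{p_n},i_{p_n})}|=\sum_{j=0}^N\alpha_jK_{i_{p_1}\cdots i_{p_n}}{}^{j}|T_{a_{p_1}}\cdots T_{a_{p_n}}|$, with $\lambda_{i_{p_k}}\in S_{p_k}$ nonzero, form an invariant tensor for the $0_S$-forced algebra of $\mathfrak G_R$.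
   Context: A semigroup is a set with closed associative multiplication; $S$ is finite and abelian; $0_S$ satisfies $0_S\lambda=\lambda0_S=0_S$. For subsets, $S_p\times S_q=\{\lambda_\alpha\lambda_\beta:\lambda_\alpha\in S_p,\lambda_\beta\in S_q\}$. The decomposition is resonant if there are $i_{(p,q)}\subset I$ with $[V_p,V_q]\subset\bigoplus_{r\in i_{(p,q)}}V_r$ and $S_p\times S_q\subset\bigcap_{r\in i_{(p,q)}}S_r$. The $n$-selector $K_{\alpha_1\cdots\alpha_n}{}^{\gamma}$ equals $1$ if $\lambda_{\alpha_1}\cdots\lambda_{\alpha_n}=\lambda_\gamma$, $0$ otherwise. $S\otimes\mathfrak g$ has basis $T_{(A,\alpha)}=\lambda_\alpha T_A$, grading $\mathfrak q(A)$, bracket $[T_{(A,\alpha)},T_{(B,\beta)}]=K_{\alpha\beta}{}^{\gamma}C_{AB}{}^CT_{(C,\gamma)}$; $\mathfrak G_R$ is spanned by $\lambda_\alpha T_{a_p}$ with $\lambda_\alpha\in S_p$. The $0_S$-forced algebra of $\mathfrak G_R$ has basis $T_{(a_p,i)}$ with $\lambda_i\in S_p$ nonzero and bracket $[T_{(a_p,i)},T_{(b_q,j)}]=\sum_{k=0}^NK_{ij}{}^kC_{a_pb_q}{}^{c_r}T_{(c_r,k)}$. Invariance of a rank-$n$ tensor on a Lie superalgebra with structure constants $C_{AB}{}^C$ means $\sum_{p=1}^{n}(-1)^{\mathfrak q(A_0)(\mathfrak q(A_1)+\cdots+\mathfrak q(A_{p-1}))}C_{A_0A_p}{}^{B}|T_{A_1}\cdots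 T_{A_{p-1}}T_BT_{A_{p+1}}\cdots T_{A_n}|=0$ for all indices. *)

From HB Require Import structures.
From mathcomp Require Import all_boot all_order all_algebra.
Set Implicit Arguments. Unset Strict Implicit. Unset Printing Implicit Defensive.
Import GRing.Theory.
Local Open Scope ring_scope.

(* A (super)algebra is presented by a finite basis type X, a Z2-grading
   [grade : X -> bool] (q(A)) and structure constants [c A B D] = C_{AB}^D,
   i.e. [T_A, T_B] = \sum_D C_{AB}^D T_D. *)

Definition is_Lie_superalgebra (R : comNzRingType) (X : finType)
  (grade : X -> bool) (c : X -> X -> X -> R) : Prop :=
  [/\ (forall A B D, c A B D != 0 -> grade D = addb (grade A) (grade B)),
      (forall A B D, c A B D = - ((-1) ^+ (grade A * grade B)%N * c B A D)) &
      (forall A B E F,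
         \sum_(D : X) c B E D * c A D F =
         \sum_(D : X) c A B D * c D E F
         + (-1) ^+ (grade A * grade B)%N * \sum_(D : X) c A E D * c B D F)].

Definition replace_at (X : Type) (n : nat) (A : {ffun 'I_n -> X}) (p : 'I_n) (B : X)
  : {ffun 'I_n -> X} := [ffun k => if k == p then B else A k].

Definition invariant_tensor (R : comNzRingType) (X : finType)
  (grade : X -> bool) (c : X -> X -> X -> R) (n : nat)
  (t : {ffun 'I_n -> X} -> R) : Prop :=
  forall (A0 : X) (A : {ffun 'I_n -> X}),
    \sum_(p < n)
       (-1) ^+ (grade A0 * \sum_(k < n | (k < p)%N) grade (A k))%N
       * \sum_(B : X) c A0 (A p) B * t (replace_at A p B) = 0.

(* n-selector: K_{a_1 ... a_n}^g = 1 if a_1 ... a_n = g, 0 otherwise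
   (for the empty list we set it to 0; it is never used with n = 0). *)
Definition selector (R : comNzRingType) (S : eqType) (mul : S -> S -> S)
  (s : seq S) (g : S) : R :=
  if s is x :: s' then ((foldl mul x s' == g) : nat)%:R else 0.

(* Resonant decomposition g = (+)_p V_p (V_p spanned by the basis vectors T_a
   with part a = p) and S = U_p S_p. *)
Definition resonant (Ig I S : finType) (R : comNzRingType) (mul : S -> S -> S)
  (part : Ig -> I) (c : Ig -> Ig -> Ig -> R) (Sp : I -> {set S}) : Prop :=
  exists i : I -> I -> {set I},
    forall p q : I,
      (forall a b d, part a = p -> part b = q -> c a b d != 0 -> part d \in i p q)
      /\ (forall x y r, x \in Sp p -> y \in Sp q -> r \in i p q -> mul x y \in Sp r).

Section Algebras.
Variables (R : comNzRingType) (Ig I S : finType) (mul : S -> S -> S)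
  (part : Ig -> I) (grade : Ig -> bool) (c : Ig -> Ig -> Ig -> R)
  (Sp : I -> {set S}).

(* Basis of the resonant subalgebra G_R: T_{(A,alpha)} with alpha in S_{part A}. *)
Definition GR_basis := {x : Ig * S | x.2 \in Sp (part x.1)}.
Definition GR_grade (X : GR_basis) : bool := grade (val X).1.
Definition GR_const (X Y Z : GR_basis) : R :=
  selector R mul [:: (val X).2; (val Y).2] (val Z).2 * c (val X).1 (val Y).1 (val Z).1.

(* Basis of the 0_S-forced algebra: T_{(A,i)} with lambda_i in S_{part A}, lambda_i <> 0_S. *)
Definition forced_basis (z : S) := {x : Ig * S | (x.2 \in Sp (part x.1)) && (x.2 != z)}.
Definition forced_grade (z : S) (X : forced_basis z) : bool := grade (val X).1.
Definition forced_const (z : S) (X Y Z : forced_basis z) : R :=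
  selector R mul [:: (val X).2; (val Y).2] (val Z).2 * c (val X).1 (val Y).1 (val Z).1.

End Algebras.

Arguments GR_basis : clear implicits.
Arguments GR_grade : clear implicits.
Arguments GR_const : clear implicits.
Arguments forced_basis : clear implicits.
Arguments forced_grade : clear implicits.
Arguments forced_const : clear implicits.

(* In the invariance sum of the expanded tensor at T_(A0,l0) and
   T_(A1,l1) ... T_(An,ln), the selector K_(l0 lp)^beta in the structure
   constants forces the new label in slot p to be beta = l0 lp; since S is
   associative and commutative, the labels then multiply to l0 l1 ... ln for
   every p.  So the sum factors as the invariance sum of the original tensor at
   A0, A1 ... An times the weight sum_g alpha_g K_(l0 l1 ... ln)^g, provided no
   term is lost because (B, l0 lp) is not a basis element.  Resonance makes C
   vanish on such terms, and in the 0_S-forced algebra the remaining ones have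
   l0 lp = 0_S, which makes the whole product 0_S, outside the support of the
   weight. *)

From mathcomp Require Import all_boot all_order all_algebra.
Set Implicit Arguments.
Unset Strict Implicit.
Unset Printing Implicit Defensive.
Import GRing.Theory.
Local Open Scope ring_scope.

Section SelectorProducts.
Variables (R : comNzRingType) (S : eqType) (mul : S -> S -> S).
Hypothesis mulA : associative mul.

Lemma foldl_mul_left a x s : foldl mul (mul a x) s = mul a (foldl mul x s).
Proof. by elim: s a x => //= y s IHs a x; rewrite -mulA IHs. Qed.

Hypothesis mulC : commutative mul.

Lemma map_if_notin (T : eqType) (f g : T -> S) p (l : seq T) :
  p \notin l -> [seq if k == p then g k else f k | k <- l] = map f l.
Proof.
by move=> pNl; apply/eq_in_map => k kl; case: eqP => // kp; rewrite -kp kl in pNl.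
Qed.

Lemma foldl_map_mul_at (T : eqType) (f : T -> S) a p (l : seq T) x :
  uniq l -> p \in l ->
  foldl mul x [seq if k == p then mul a (f k) else f k | k <- l]
  = mul a (foldl mul x (map f l)).
Proof.
elim: l x => //= y l IHl x /andP[yNl l_uniq]; rewrite in_cons.
have [<- _ | ne_yp /= pl] := eqVneq y p; last by rewrite IHl.
by rewrite map_if_notin // -foldl_mul_left mulA (mulC x) -mulA.
Qed.

Lemma selector_map_mul_at (T : eqType) (f : T -> S) a p (l : seq T) g :
  uniq l -> p \in l ->
  selector R mul [seq if k == p then mul a (f k) else f k | k <- l] g
  = selector R mul (a :: map f l) g.
Proof.
case: l => //= y l /andP[yNl l_uniq]; rewrite in_cons /selector /=.
have [<- _ | ne_yp /= pl] := eqVneq y p; first by rewrite map_if_notin.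
by rewrite foldl_map_mul_at // foldl_mul_left.
Qed.

End SelectorProducts.

Section AbsorbingElement.
Variables (R : comNzRingType) (S : eqType) (mul : S -> S -> S) (z : S).
Hypotheses (z_left_zero : left_zero z mul) (z_right_zero : right_zero z mul).

Lemma foldl_absorbing x s : z \in x :: s -> foldl mul x s = z.
Proof.
elim: s x => [|y s IHs] x; first by rewrite inE => /eqP.
rewrite /= !in_cons => z_in; apply: IHs; rewrite in_cons.
case/orP: z_in => [/eqP <-|/orP[/eqP <-|->]]; last by rewrite orbT.
- by rewrite z_left_zero eqxx.
- by rewrite z_right_zero eqxx.
Qed.

Lemma selector_absorbing s g : z \in s -> g != z -> selector R mul s g = 0.
Proof.
case: s => // x s z_in gNz.
by rewrite /selector (foldl_absorbing z_in) eq_sym (negbTE gNz).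
Qed.

End AbsorbingElement.

Section SemigroupExpansion.
Variables (R : comNzRingType) (Ig S : finType).
Variables (grade : Ig -> bool) (C : Ig -> Ig -> Ig -> R).
Variables (mul : S -> S -> S) (n : nat) (t : {ffun 'I_n -> Ig} -> R).
Variables (P : pred (Ig * S)) (Q : pred S) (alpha : S -> R).

Local Notation basis := {x : Ig * S | P x}.

Definition lie_indices (T : {ffun 'I_n -> basis}) : {ffun 'I_n -> Ig} :=
  [ffun k => (val (T k)).1].

Definition semigroup_indices (T : {ffun 'I_n -> basis}) : seq S :=
  [seq (val (T k)).2 | k <- enum 'I_n].

Definition expansion_weight (s : seq S) : R :=
  \sum_(g | Q g) alpha g * selector R mul s g.

Definition expanded_grade (X : basis) : bool := grade (val X).1.

Definition expanded_const (X Y Z : basis) : R :=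
  selector R mul [:: (val X).2; (val Y).2] (val Z).2
  * C (val X).1 (val Y).1 (val Z).1.

Definition expanded_tensor (T : {ffun 'I_n -> basis}) : R :=
  \sum_(g | Q g) alpha g * selector R mul (semigroup_indices T) g
  * t (lie_indices T).

Lemma expanded_tensorE T :
  expanded_tensor T = expansion_weight (semigroup_indices T) * t (lie_indices T).
Proof. by rewrite /expanded_tensor /expansion_weight mulr_suml. Qed.

Lemma lie_indices_replace A p B :
  lie_indices (replace_at A p B) = replace_at (lie_indices A) p (val B).1.
Proof. by apply/ffunP => k; rewrite !ffunE; case: eqP. Qed.

Lemma semigroup_indices_replace A p B :
  semigroup_indices (replace_at A p B)
  = [seq if k == p then (val B).2 else (val (A k)).2 | k <- enum 'I_n].
Proof. by apply: eq_map => k; rewrite ffunE; case: eqP. Qed.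

Hypotheses (mulA : associative mul) (mulC : commutative mul).

Lemma expansion_weight_absorbing z (A0 : basis) (A : {ffun 'I_n -> basis}) p :
  left_zero z mul -> right_zero z mul -> (forall g, Q g -> g != z) ->
  mul (val A0).2 (val (A p)).2 = z ->
  expansion_weight ((val A0).2 :: semigroup_indices A) = 0.
Proof.
move=> z_left z_right Q_neq_z prod_z.
rewrite /expansion_weight big1 // => g /Q_neq_z gNz.
rewrite -(selector_map_mul_at R mulA mulC (fun k => (val (A k)).2) _ (p := p))
  ?enum_uniq ?mem_enum //.
rewrite (selector_absorbing R z_left z_right _ gNz) ?mulr0 //; apply/mapP.
by exists p; rewrite ?mem_enum // eqxx prod_z.
Qed.

Hypothesis expansion_closed : forall (A0 : basis) (A : {ffun 'I_n -> basis}) p b,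
  ~~ P (b, mul (val A0).2 (val (A p)).2) ->
  C (val A0).1 (val (A p)).1 b
  * expansion_weight ((val A0).2 :: semigroup_indices A) = 0.

Lemma expanded_bracket_sum (A0 : basis) (A : {ffun 'I_n -> basis}) (p : 'I_n) :
  \sum_(B : basis) expanded_const A0 (A p) B * expanded_tensor (replace_at A p B)
  = expansion_weight ((val A0).2 :: semigroup_indices A)
    * \sum_(b : Ig) C (val A0).1 (lie_indices A p) b
                    * t (replace_at (lie_indices A) p b).
Proof.
set l0 := (val A0).2; set lp := (val (A p)).2; set a := lie_indices A.
set W := expansion_weight _.
pose G (x : Ig * S) := selector R mul [:: l0; lp] x.2 * C (val A0).1 (val (A p)).1 x.1
  * (expansion_weight [seq if k == p then x.2 else (val (A k)).2 | k <- enum 'I_n]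
     * t (replace_at a p x.1)).
transitivity (\sum_(x | P x) G x).
  rewrite (big_sub P); apply: eq_bigr => B _.
  by rewrite expanded_tensorE semigroup_indices_replace lie_indices_replace.
transitivity (\sum_(b : Ig) \sum_(beta : S) if P (b, beta) then G (b, beta) else 0).
  by rewrite pair_bigA big_mkcond; apply: eq_bigr => -[].
rewrite mulr_sumr; apply: eq_bigr => b _.
rewrite (bigD1 (mul l0 lp)) //= big1 ?addr0 => [|beta ne_beta]; last first.
  by case: ifP => // _; rewrite /G /selector /= eq_sym (negbTE ne_beta) !mul0r.
have weight_at_product :
    expansion_weight [seq if k == p then mul l0 lp else (val (A k)).2 | k <- enum 'I_n]
    = W.
  rewrite /W /expansion_weight; apply: eq_bigr => g _; congr (_ * _).
  rewrite (eq_map (g := fun k => if k == p then mul l0 (val (A k)).2 else (val (A k)).2));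
    last by move=> k; case: eqP => // ->.
  by rewrite selector_map_mul_at ?enum_uniq ?mem_enum.
rewrite /G weight_at_product /selector /= eqxx mul1r mulrCA /a ffunE.
case: ifP => // b_notin.
by rewrite mulrA [W * _]mulrC expansion_closed ?b_notin // mul0r.
Qed.

Hypothesis t_invariant : invariant_tensor grade C t.

Lemma expanded_tensor_invariant :
  invariant_tensor expanded_grade expanded_const expanded_tensor.
Proof.
move=> A0 A.
have signE p : (\sum_(k < n | k < p) expanded_grade (A k)
               = \sum_(k < n | k < p) grade (lie_indices A k))%N.
  by apply: eq_bigr => k _; rewrite ffunE.
under eq_bigr => p _ do rewrite signE expanded_bracket_sum mulrCA.
by rewrite -mulr_sumr t_invariant mulr0.
Qed.

End SemigroupExpansion.

Lemma resonant_const_eq0 (R : comNzRingType) (Ig I S : finType)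
    (mul : S -> S -> S) (part : Ig -> I) (C : Ig -> Ig -> Ig -> R)
    (Sp : I -> {set S}) a0 a1 b x y :
  resonant mul part C Sp -> x \in Sp (part a0) -> y \in Sp (part a1) ->
  mul x y \notin Sp (part b) -> C a0 a1 b = 0.
Proof.
move=> [i resonance] x_in y_in; apply: contraNeq => C_neq0.
have [bracket_in prod_in] := resonance (part a0) (part a1).
exact: prod_in x_in y_in (bracket_in _ _ _ erefl erefl C_neq0).
Qed.

Theorem mainTheorem6
  (R : fieldType) (Ig I S : finType)
  (grade : Ig -> bool) (C : Ig -> Ig -> Ig -> R)
  (part : Ig -> I) (mul : S -> S -> S) (Sp : I -> {set S})
  (n : nat) (t : {ffun 'I_n -> Ig} -> R) :
  is_Lie_superalgebra grade C ->
  associative mul -> commutative mul ->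
  \bigcup_(p : I) Sp p = [set: S] ->
  resonant mul part C Sp ->
  invariant_tensor grade C t ->
  (* (i) *)
  (forall alpha : S -> R,
     invariant_tensor (GR_grade Ig I S part grade Sp) (GR_const R Ig I S mul part C Sp)
       (fun T : {ffun 'I_n -> GR_basis Ig I S part Sp} =>
          \sum_(g : S) alpha g
            * selector R mul [seq (val (T k)).2 | k <- enum 'I_n] g
            * t [ffun k => (val (T k)).1]))
  /\
  (* (ii) *)
  (forall z : S, (forall x, mul z x = z /\ mul x z = z) ->
   forall alpha : S -> R,
     invariant_tensor (forced_grade Ig I S part grade Sp z)
       (forced_const R Ig I S mul part C Sp z)
       (fun T : {ffun 'I_n -> forced_basis Ig I S part Sp z} =>
          \sum_(j : S | j != z) alpha j
            * selector R mul [seq (val (T k)).2 | k <- enum 'I_n] j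
            * t [ffun k => (val (T k)).1])).
Proof.
move=> _ mulA mulC _ res t_inv.
split=> [alpha | z z_absorbing alpha].
  apply: (expanded_tensor_invariant (P := fun x => x.2 \in Sp (part x.1))
            (Q := xpredT) mulA mulC _ t_inv) => A0 A p b b_notin.
  by rewrite (resonant_const_eq0 res (valP A0) (valP (A p)) b_notin) mul0r.
have z_left : left_zero z mul by move=> x; case: (z_absorbing x).
have z_right : right_zero z mul by move=> x; case: (z_absorbing x).
apply: (expanded_tensor_invariant
          (P := fun x => (x.2 \in Sp (part x.1)) && (x.2 != z))
          (Q := fun j => j != z) mulA mulC _ t_inv) => A0 A p b.
rewrite negb_and negbK => /orP[b_notin | /eqP /= prod_z].
  have /andP[l0_in _] := valP A0; have /andP[lp_in _] := valP (A p).
  by rewrite (resonant_const_eq0 res l0_in lp_in b_notin) mul0r.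
by rewrite (expansion_weight_absorbing alpha mulA mulC z_left z_right _ prod_z) ?mulr0.
Qed.
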